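(* Let $m\ge 1$ and $\epsilon_L>0$. Fix a list of $2m$ spatial points $p_1,\dots,p_{2m}$ (the selected point list assigned to a trajectory). For a trajectory $\tau$ (a finite sequence of spatial points), let $f_k$ denote the number of occurrences of $p_k$ in $\tau$. The local perturbation mechanism $\mathcal{M}$ applied to $\tau$ outputs the vector $(f_1^*,\dots,f_{2m}^* )$ computed as follows. Stage 1: for $k=1,\dots,m$, sample $\eta\sim Lap(-f_k,1/\epsilon_L)$, set $f_k^*=\max(\mathrm{RoundInt}(f_k+\eta),0)$; then set $\bar\mu=\frac1m\sum_{k=1}^m (f_k^*-f_k)$. Stage 2: for $k=m+1,\dots,2m$, sample $\eta\sim Lap(-\bar\mu,1/\epsilon_L)$ and set $f_k^*=\max(\mathrm{RoundInt}(f_k+\eta),0)$. All Laplace samples are drawn independently (given the quantities they depend on). Then $\mathcal{M}$ provides $\epsilon_L$-differential privacy to a trajectory $\tau$, i.e. for any two adjacent trajectories $\tau,\tau'$ (differing in at most one point) and any output $\tilde\tau$, $\Pr[\mathcal{M}(\tau)=\tilde\tau]\le e^{\epsilon_L}\Pr[\mathcal{M}(\tau')=\tilde\tau]$.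
   Context: $Lap(\mu,\lambda)$ denotes the Laplace distribution with mean $\mu$ and scale $\lambda$, density $\frac{1}{2\lambda}\exp(-|x-\mu|/\lambda)$. $\mathrm{RoundInt}$ rounds a real number to the nearest integer. Two trajectories are adjacent if they differ in at most one point, so that their occurrence-count vectors $(f_1,\dots,f_{2m})$ over the fixed points $p_1,\dots,p_{2m}$ differ by at most $1$ in $\ell_1$-norm. *)

From HB Require Import structures.
From mathcomp Require Import all_boot all_order all_algebra.
From mathcomp Require Import all_classical all_reals all_analysis.
Set Implicit Arguments. Unset Strict Implicit. Unset Printing Implicit Defensive.
Import Order.TTheory GRing.Theory Num.Theory.
Local Open Scope classical_set_scope.
Local Open Scope ring_scope.

Definition lap_pdf {R : realType} (mu lam x : R) : R :=
  (2 * lam)^-1 * expR (- `|x - mu| / lam).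

Definition is_laplace {R : realType} {d : measure_display} {T : measurableType d}
  (P : probability T R) (X : T -> R) (mu lam : R) : Prop :=
  forall A : set R, measurable A ->
    P (X @^-1` A) = (\int[@lebesgue_measure R]_(x in A) (lap_pdf mu lam x)%:E)%E.

Definition mutually_independent {R : realType} {d : measure_display}
  {T : measurableType d} (P : probability T R) (n : nat) (X : 'I_n -> T -> R) : Prop :=
  forall A : 'I_n -> set R, (forall i, measurable (A i)) ->
    P (\bigcap_(i in [set: 'I_n]) (X i @^-1` A i)) =
    (\prod_(i < n) P (X i @^-1` A i))%E.

Definition RoundInt {R : realType} (x : R) : int := Num.floor (x + 2^-1).

Definition occ {T : eqType} (n : nat) (p : 'I_n -> T) (tau : seq T) (k : 'I_n) : nat :=
  count_mem (p k) tau.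

Definition adjacent_traj {T : eqType} (n : nat) (p : 'I_n -> T) (tau tau' : seq T) : Prop :=
  (\sum_(k < n) `|(occ p tau k)%:Z - (occ p tau' k)%:Z|%N <= 1)%N.

(* The local perturbation mechanism, driven by the raw noise xi_k ~ Lap(0, 1/eps):
   the Laplace sample of coordinate k with mean c is eta_k = c + xi_k. *)
Section Mechanism.
Context {R : realType} {Omega : Type} {T : eqType} (m : nat)
  (p : 'I_(2 * m) -> T) (xi : 'I_(2 * m) -> Omega -> R) (tau : seq T).

Let f (k : 'I_(2 * m)) : R := (occ p tau k)%:R.

Definition stage1 (k : 'I_(2 * m)) (w : Omega) : int :=
  Order.max (RoundInt (f k + (- f k + xi k w))) 0%Z.

Definition mubar (w : Omega) : R :=
  m%:R^-1 * \sum_(k < 2 * m | (val k < m)%N) ((stage1 k w)%:~R - f k).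

Definition mech (w : Omega) (k : 'I_(2 * m)) : int :=
  if (val k < m)%N then stage1 k w
  else Order.max (RoundInt (f k + (- mubar w + xi k w))) 0%Z.
End Mechanism.

From HB Require Import structures.
From mathcomp Require Import all_boot all_order all_algebra.
From mathcomp Require Import all_classical all_reals all_analysis.
From mathcomp Require Import measurable_realfun ring lra.
Import Order.TTheory GRing.Theory Num.Theory.
Local Open Scope classical_set_scope.
Local Open Scope ring_scope.

(* Once the output [out] is fixed, the stage-1 average [mubar] is a function of
   [out] and of the occurrence counts only.  Hence the event [mech tau = out] is
   the intersection of the events [round_nonneg (c_k + xi_k) = out_k] with
   deterministic centres [c_k] (0 in stage 1, [f_k - mubar] in stage 2), and by
   independence its probability is a product of Laplace integrals over level
   sets of a monotone map, i.e. over intervals.  Moving a centre by [e] changes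
   such an integral by a factor at most [exp (eps |e|)], and for adjacent
   trajectories the centres move by at most
   [sum_(k >= m) |df_k| + m |dmubar| <= sum_k |df_k| <= 1] in total. *)

Section lebesgue_translation.
Context {R : realType}.
Local Open Scope ereal_scope.

Lemma measurable_addr (e : R) : measurable_fun [set: R] (+%R^~ e).
Proof. by apply: measurable_funD => //; exact: measurable_cst. Qed.

Lemma lebesgue_measure_addr (e : R) (A : set R) : measurable A ->
  pushforward lebesgue_measure (+%R^~ e : R -> measurableTypeR R) A =
  lebesgue_measure A.
Proof.
move=> mA; apply/esym/lebesgue_measure_unique => //= [|_ _ [[a b] _ <-]].
  exact: measurable_addr.
rewrite /pushforward.
have -> : +%R^~ e @^-1` `]a, b] = `](a - e)%R, (b - e)%R]%classic.
  by apply/seteqP; split => x /=; rewrite !in_itv /= ltrBlDr lerBrDr.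
rewrite !lebesgue_measure_itv /= !lte_fin ltrD2r; case: ifP => // _.
by rewrite -!EFinD; congr EFin; ring.
Qed.

Lemma ge0_integral_addr (e : R) (B : set R) (f : R -> \bar R) :
  measurable B -> measurable_fun [set: R] f -> (forall x, 0 <= f x) ->
  \int[lebesgue_measure]_(x in +%R^~ e @^-1` B) f (x + e)%R =
  \int[lebesgue_measure]_(x in B) f x.
Proof.
move=> mB mf f0.
transitivity (\int[pushforward lebesgue_measure (+%R^~ e : R -> measurableTypeR R)]_(x in B) f x).
  rewrite ge0_integral_pushforward //; [exact: measurable_addr|exact: measurable_funS mf].
apply: eq_measure_integral => [|? A mA _]; first exact: measurable_addr.
exact: lebesgue_measure_addr.
Qed.

End lebesgue_translation.

Section laplace_density.
Context {R : realType}.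
Variables (mu lam : R).
Hypothesis lam_gt0 : 0 < lam.

Lemma lap_pdf_ge0 x : 0 <= lap_pdf mu lam x.
Proof. by rewrite /lap_pdf mulr_ge0 ?expR_ge0 // invr_ge0 mulr_ge0 // ltW. Qed.

Lemma measurable_lap_pdf : measurable_fun [set: R] (lap_pdf mu lam).
Proof.
apply: measurable_funM; first exact: measurable_cst.
apply: measurableT_comp; first exact: measurable_expR.
apply: measurable_funM; last exact: measurable_cst.
apply: measurableT_comp; first exact: oppr_measurable.
apply: measurableT_comp; first exact: normr_measurable.
by apply: measurable_funB; [exact: measurable_id|exact: measurable_cst].
Qed.

Lemma lap_pdf_addr_le e x :
  lap_pdf mu lam (x + e) <= expR (`|e| / lam) * lap_pdf mu lam x.
Proof.
rewrite /lap_pdf mulrCA; apply: ler_wpM2l; first by rewrite invr_ge0 mulr_ge0 // ltW.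
rewrite -expRD ler_expR -mulrDl ler_pM2r ?invr_gt0 //.
by have := ler_normD (x + e - mu) (- e); rewrite addrAC addrK normrN; lra.
Qed.

Lemma lap_integral_addr_le e (B : set R) : measurable B ->
  (\int[lebesgue_measure]_(x in B) (lap_pdf mu lam x)%:E <=
   (expR (`|e| / lam))%:E *
   \int[lebesgue_measure]_(x in +%R^~ e @^-1` B) (lap_pdf mu lam x)%:E)%E.
Proof.
move=> mB; have mpre : measurable (+%R^~ e @^-1` B).
  by rewrite -[X in measurable X]setTI; exact: measurable_addr.
have mpdf := measurable_lap_pdf.
rewrite -(ge0_integral_addr e) //; last 2 first.
- exact/measurable_EFinP.
- by move=> x; rewrite lee_fin lap_pdf_ge0.
rewrite -ge0_integralZl_EFin ?expR_ge0 //; last 2 first.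
- by move=> x _; rewrite lee_fin lap_pdf_ge0.
- exact/measurable_EFinP/measurable_funTS.
apply: (@ge0_le_integral _ _ _ lebesgue_measure) => //.
- by move=> x _; rewrite lee_fin lap_pdf_ge0.
- apply/measurable_EFinP/measurable_funTS.
  by apply: measurableT_comp; [exact: mpdf|exact: measurable_addr].
- by apply/measurable_EFinP/measurable_funTS/measurable_funM => //; exact: measurable_cst.
- by move=> x _; rewrite lee_fin lap_pdf_addr_le.
Qed.

End laplace_density.

Section rounding.
Context {R : realType}.

Definition round_nonneg (x : R) : int := Order.max (RoundInt x) 0%Z.

Lemma round_nonneg_homo : {homo round_nonneg : x y / x <= y}.
Proof. by move=> x y xy; rewrite le_max2 // le_floor // lerD2r. Qed.

Definition round_level (c : R) (z : int) : set R :=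
  [set x | round_nonneg (c + x) = z].

Lemma preimage_addr_round_level (c e : R) (z : int) :
  +%R^~ e @^-1` round_level c z = round_level (c + e) z.
Proof.
have shift x : c + (x + e) = c + e + x by rewrite addrA addrAC.
by apply/seteqP; split => x; rewrite /round_level /= shift.
Qed.

Lemma measurable_round_level (c : R) (z : int) : measurable (round_level c z).
Proof.
apply: is_interval_measurable => x y /= zx zy t /andP[xt ty].
apply/eqP; rewrite eq_le -{1}zy -zx.
by rewrite !round_nonneg_homo // lerD2l.
Qed.

End rounding.

Section noise_center.
Context {R : realFieldType} {m : nat}.
Hypothesis m_gt0 : (0 < m)%N.
Implicit Types o f g : 'I_(2 * m) -> R.

Definition stage1_bias o f : R :=
  m%:R^-1 * \sum_(k < 2 * m | (val k < m)%N) (o k - f k).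

Definition noise_center o f (k : 'I_(2 * m)) : R :=
  if (val k < m)%N then 0 else f k - stage1_bias o f.

Lemma sum_stage2_const (x : R) : \sum_(k < 2 * m | ~~ (val k < m)%N) x = x *+ m.
Proof.
have total : \sum_(k < 2 * m) x = x *+ (2 * m) by rewrite sumr_const card_ord.
have low : \sum_(k < 2 * m | (val k < m)%N) x = x *+ m.
  by rewrite -(big_ord_widen _ (fun=> x)) ?leq_pmull // sumr_const card_ord.
move: total; rewrite (bigID (fun k : 'I_(2 * m) => (val k < m)%N)) /= low.
by rewrite mul2n -addnn mulrnDr => /addrI.
Qed.

Lemma stage1_bias_dist o f g :
  `|stage1_bias o f - stage1_bias o g| *+ m <=
  \sum_(k < 2 * m | (val k < m)%N) `|f k - g k|.
Proof.
have m_neq0 : m%:R != 0 :> R by rewrite pnatr_eq0 -lt0n.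
rewrite -mulr_natr /stage1_bias -mulrBr normrM ger0_norm ?invr_ge0 //.
rewrite mulrAC mulVf // mul1r -sumrB; apply: le_trans (ler_norm_sum _ _ _) _.
apply: ler_sum => k _.
by rewrite (_ : o k - f k - (o k - g k) = - (f k - g k)) ?normrN //; ring.
Qed.

Lemma sum_dist_noise_center o f g :
  \sum_k `|noise_center o f k - noise_center o g k| <= \sum_k `|f k - g k|.
Proof.
rewrite [X in _ <= X](bigID (fun k : 'I_(2 * m) => (val k < m)%N)) /=.
rewrite (bigID (fun k : 'I_(2 * m) => (val k < m)%N)) /= big1 ?add0r; last first.
  by move=> k low; rewrite /noise_center low subrr normr0.
apply: le_trans (_ : \sum_(k < 2 * m | ~~ (val k < m)%N)
    (`|f k - g k| + `|stage1_bias o f - stage1_bias o g|) <= _).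
  apply: ler_sum => k /negPf high; rewrite /noise_center high.
  rewrite (_ : f k - _ - _ = f k - g k - (stage1_bias o f - stage1_bias o g)).
    exact: ler_normB.
  ring.
by rewrite big_split /= sum_stage2_const addrC lerD2r stage1_bias_dist.
Qed.

End noise_center.

Lemma prode_le_expR_sum {R : realType} {n : nat} (a b : 'I_n -> \bar R) (r : 'I_n -> R) :
  (forall i, (0 <= a i)%E) -> (forall i, (a i <= (expR (r i))%:E * b i)%E) ->
  (\prod_i a i <= (expR (\sum_i r i))%:E * \prod_i b i)%E.
Proof.
move=> a_ge0 ab; rewrite expR_sum -prodEFin -big_split /=.
have : (0 <= \prod_i a i <= \prod_i ((expR (r i))%:E * b i))%E.
  elim/big_ind2: _ => [|x1 x2 y1 y2 /andP[x1_ge0 x12] /andP[y1_ge0 y12]|i _].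
  - by rewrite lexx lee01.
  - by rewrite mule_ge0 //= lee_pmul.
  - by rewrite a_ge0 ab.
by case/andP.
Qed.

Lemma adjacent_traj_sum_le {R : numDomainType} (T : eqType) (n : nat) (p : 'I_n -> T)
    (tau tau' : seq T) :
  adjacent_traj p tau tau' ->
  \sum_k `|(occ p tau k)%:R - (occ p tau' k)%:R : R| <= 1.
Proof.
rewrite /adjacent_traj -(ler_nat R) natr_sum => adj.
by apply: le_trans adj; apply: ler_sum => k _; rewrite natr_absz intr_norm rmorphB.
Qed.

Section mechanism_event.
Context {R : realType} {Omega : Type} {T : eqType} {m : nat}.
Variables (p : 'I_(2 * m) -> T) (xi : 'I_(2 * m) -> Omega -> R).
Variables (tau : seq T) (out : 'I_(2 * m) -> int).

Definition mech_center : 'I_(2 * m) -> R :=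
  noise_center (fun k => (out k)%:~R) (fun k => (occ p tau k)%:R).

Lemma stage1E k w : stage1 p xi tau k w = round_nonneg (xi k w).
Proof. by rewrite /stage1 addNKr. Qed.

Lemma mechE w : (forall k, (val k < m)%N -> stage1 p xi tau k w = out k) ->
  forall k, mech p xi tau w k = round_nonneg (mech_center k + xi k w).
Proof.
move=> stage1_out k; rewrite /mech /mech_center /noise_center.
case: ifP => _; first by rewrite stage1E add0r.
have -> : mubar p xi tau w = stage1_bias (fun k => (out k)%:~R) (fun k => (occ p tau k)%:R).
  by rewrite /mubar /stage1_bias; congr (_ * _); apply: eq_bigr => j /stage1_out ->.
by rewrite addrA.
Qed.

Lemma mech_eventE : [set w | mech p xi tau w = out] =
  \bigcap_(k in [set: 'I_(2 * m)]) xi k @^-1` round_level (mech_center k) (out k).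
Proof.
apply/seteqP; split => w /=.
- move=> mech_out k _; rewrite /round_level /= -mechE ?mech_out // => j low.
  by rewrite -mech_out /mech low.
- move=> levels; have stage1_out k : (val k < m)%N -> stage1 p xi tau k w = out k.
    move=> low; have := levels k I.
    by rewrite /= /round_level /mech_center /noise_center low /= add0r stage1E.
  by apply/funext => k; rewrite mechE //; exact: levels.
Qed.

End mechanism_event.

Section mechanism_probability.
Context {R : realType} {d : measure_display} {Omega : measurableType d}.
Context {P : probability Omega R} {T : eqType} {m : nat} {p : 'I_(2 * m) -> T}.
Context {xi : 'I_(2 * m) -> Omega -> R} {lam : R}.
Hypothesis xi_lap : forall k, is_laplace P (xi k) 0 lam.
Hypothesis xi_indep : mutually_independent P xi.

Lemma prob_mech_event (tau : seq T) (out : 'I_(2 * m) -> int) :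
  P [set w | mech p xi tau w = out] =
  (\prod_k \int[lebesgue_measure]_(x in round_level (mech_center p tau out k) (out k))
     (lap_pdf 0 lam x)%:E)%E.
Proof.
rewrite mech_eventE xi_indep => [|k]; last exact: measurable_round_level.
by apply: eq_bigr => k _; rewrite xi_lap //; exact: measurable_round_level.
Qed.

End mechanism_probability.

Lemma sum_dist_mech_center {R : realType} {T : eqType} (m : nat) (p : 'I_(2 * m) -> T)
    (tau tau' : seq T) (out : 'I_(2 * m) -> int) :
  (0 < m)%N -> adjacent_traj p tau tau' ->
  \sum_k `|mech_center p tau' out k - mech_center p tau out k| <= 1 :> R.
Proof.
move=> m_gt0 adj; apply: le_trans (sum_dist_noise_center m_gt0 _ _ _) _.
by rewrite (eq_bigr _ (fun k _ => distrC _ _)); exact: adjacent_traj_sum_le.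
Qed.

Theorem theorem3 (R : realType) (d : measure_display) (Omega : measurableType d)
  (P : probability Omega R) (T : eqType) (m : nat) (epsL : R)
  (p : 'I_(2 * m) -> T) (xi : 'I_(2 * m) -> Omega -> R) :
  (0 < m)%N -> 0 < epsL ->
  (forall k, measurable_fun setT (xi k)) ->
  (forall k, is_laplace P (xi k) 0 epsL^-1) ->
  mutually_independent P xi ->
  forall (tau tau' : seq T), adjacent_traj p tau tau' ->
  forall out : 'I_(2 * m) -> int,
    (P [set w | mech p xi tau w = out]
      <= (expR epsL)%:E * P [set w | mech p xi tau' w = out])%E.
Proof.
move=> m_gt0 eps_gt0 _ xi_lap xi_indep tau tau' adj out.
have lam_gt0 : 0 < epsL^-1 by rewrite invr_gt0.
have level_integral_ge0 c z :
    (0 <= \int[lebesgue_measure]_(x in round_level c z) (lap_pdf 0 epsL^-1 x)%:E)%E.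
  by apply: integral_ge0 => x _; rewrite lee_fin lap_pdf_ge0.
rewrite !(prob_mech_event xi_lap xi_indep).
pose shift k : R := mech_center p tau' out k - mech_center p tau out k.
apply: le_trans (prode_le_expR_sum _ _ (fun k => `|shift k| / epsL^-1) _ _) _; last first.
- apply: lee_wpmul2r.
    by apply: prode_ge0 => k _; exact: level_integral_ge0.
  rewrite lee_fin ler_expR -mulr_suml invrK; apply: ler_piMl; first exact: ltW.
  exact: sum_dist_mech_center.
- move=> k /=; have -> : mech_center p tau' out k = mech_center p tau out k + shift k.
    by rewrite /shift addrC subrK.
  rewrite -preimage_addr_round_level.
  by apply: lap_integral_addr_le => //; exact: measurable_round_level.
- by move=> k; exact: level_integral_ge0.
Qed.
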